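(* Let $\sigma>0$, $\eta>0$, $\hat\alpha>0$, $h>0$, $r\ge0$, $a\in\mathbb{R}$, and for $\beta\ge0$ let $v_\beta$ denote the unique $C^1[0,\infty)$ solution of $\frac{\sigma^2}2v'(y)=\beta+\frac{\hat\alpha}4v(y)^2+\eta y(v(y)-\frac h\eta)-av(y)$, $y\ge0$, $v(0)=-r$. Let $\underline\beta_2=-ar-\frac{\hat\alpha r^2}4$. Then: (i) if $a>-\frac{\hat\alpha}4r$ and $\beta\ge0$, then $\beta\in\mathcal D_1$ if and only if there exists $x_0\in(0,\infty)$ with $v_\beta'(x_0)<0$; (ii) if $a\le-\frac{\hat\alpha}4r$ and $\beta>\underline\beta_2$, then $\beta\in\mathcal D_2$ if and only if there exists $x_0\in(0,\infty)$ with $v_\beta'(x_0)<0$.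
   Context: $\mathcal D_1=\{\beta\ge0:\exists x_\beta\ge0$ such that $v_\beta$ is nondecreasing on $(0,x_\beta)$ and decreasing on $(x_\beta,\infty)\}$ and $\mathcal D_2=\{\beta>\underline\beta_2:\exists x_\beta\ge0$ such that $v_\beta$ is nondecreasing on $(0,x_\beta)$ and decreasing on $(x_\beta,\infty)\}$. *)

From Stdlib Require Import Reals Lra.
From Coquelicot Require Import Coquelicot.
Open Scope R_scope.

(* Right-hand side of the ODE, already divided by sigma^2/2:
   v'(y) = (2/sigma^2) * (beta + alpha/4 v^2 + eta y (v - h/eta) - a v). *)
Definition ode_rhs (sigma eta alpha h a beta y w : R) : R :=
  (2 / sigma ^ 2) * (beta + alpha / 4 * w ^ 2 + eta * y * (w - h / eta) - a * w).

(* v is a C^1[0,oo) solution of the ODE with v(0) = -r: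
   v(0) = -r, v is right-continuous at 0, v has a right derivative at 0
   equal to the RHS, and v is differentiable at every y > 0 with derivative
   given by the RHS (continuity of v' then follows from the equation). *)
Definition is_sol (sigma eta alpha h r a beta : R) (v : R -> R) : Prop :=
  v 0 = - r /\
  filterlim v (at_right 0) (locally (- r)) /\
  filterlim (fun y => (v y - v 0) / y) (at_right 0)
    (locally (ode_rhs sigma eta alpha h a beta 0 (v 0))) /\
  (forall y, 0 < y -> is_derive v y (ode_rhs sigma eta alpha h a beta y (v y))).

Definition unimodal (v : R -> R) : Prop :=
  exists x, 0 <= x /\
    (forall y z, 0 < y -> y <= z -> z < x -> v y <= v z) /\
    (forall y z, x < y -> y < z -> v z < v y).

Definition beta2_low (alpha r a : R) : R := - a * r - alpha * r ^ 2 / 4.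

Definition in_D1 (beta : R) (v : R -> R) : Prop := 0 <= beta /\ unimodal v.
Definition in_D2 (alpha r a beta : R) (v : R -> R) : Prop :=
  beta2_low alpha r a < beta /\ unimodal v.

(** At a critical point [y] of a solution, differentiating the equation gives
    [v''(y) = (2 eta / sigma^2) (v(y) - h/eta)]: critical points below the level
    [h/eta] are strict local maxima, those above it strict local minima.
    Since [v] starts at [-r < h/eta], wherever [v' < 0] the value of [v] is at most
    [h/eta] (otherwise [v] would have had an interior maximum above that level).
    Hence once [v'] is negative it stays negative: a later return of [v'] to [0]
    would happen below [h/eta], at a local maximum reached while decreasing.
    So [{v' < 0}] is a half-line [(x, oo)] and [v] is unimodal; conversely a
    unimodal [v] has [v' < 0] somewhere by the mean value theorem. *)

From Stdlib Require Import Reals Lra Classical.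
From Coquelicot Require Import Coquelicot.
Open Scope R_scope.

Lemma is_derive_pos_locally f x l : is_derive f x l -> 0 < l ->
  exists d, 0 < d /\ (forall y, x - d < y < x -> f y < f x) /\
                     (forall y, x < y < x + d -> f x < f y).
Proof.
  intros H Hl. apply is_derive_Reals in H.
  destruct (H l Hl) as [d Hd]. exists d. split; [apply cond_pos|].
  split; intros y Hy;
  (assert (Hne : y - x <> 0) by lra);
  (assert (Hab : Rabs (y - x) < d) by (apply Rabs_def1; lra));
  specialize (Hd (y - x) Hne Hab);
  replace (x + (y - x)) with y in Hd by ring;
  apply Rabs_def2 in Hd;
  set (q := (f y - f x) / (y - x)) in Hd;
  (assert (Hq : f y - f x = q * (y - x)) by (unfold q; field; lra));
  nra.
Qed.

Lemma is_derive_neg_locally f x l : is_derive f x l -> l < 0 ->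
  exists d, 0 < d /\ (forall y, x - d < y < x -> f x < f y) /\
                     (forall y, x < y < x + d -> f y < f x).
Proof.
  intros H Hl. apply is_derive_opp in H.
  assert (Hol : 0 < opp l) by (unfold opp; simpl; lra).
  destruct (is_derive_pos_locally _ _ _ H Hol) as [d [Hd [Hleft Hright]]].
  exists d; split; [lra|]; split; intros y Hy;
    [specialize (Hleft y Hy) | specialize (Hright y Hy)];
    unfold opp in *; simpl in *; lra.
Qed.

Lemma exists_left_near a x d : a < x -> 0 < d -> exists y, a < y < x /\ x - d < y.
Proof.
  intros Hax Hd. exists ((Rmax a (x - d) + x) / 2).
  pose proof (Rmax_l a (x - d)); pose proof (Rmax_r a (x - d)).
  assert (Rmax a (x - d) < x) by (apply Rmax_lub_lt; lra). lra.
Qed.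

Lemma exists_right_near x b d : x < b -> 0 < d -> exists y, x < y < b /\ y < x + d.
Proof.
  intros Hxb Hd. exists ((x + Rmin b (x + d)) / 2).
  pose proof (Rmin_l b (x + d)); pose proof (Rmin_r b (x + d)).
  assert (x < Rmin b (x + d)) by (apply Rmin_glb_lt; lra). lra.
Qed.

Lemma at_right_lt_of_lim (v : R -> R) l K :
  filterlim v (at_right 0) (locally l) -> l < K ->
  exists d, 0 < d /\ forall y, 0 < y < d -> v y < K.
Proof.
  intros Hlim HlK. destruct (Hlim _ (open_lt K l HlK)) as [d Hd].
  exists d. split; [apply cond_pos|]. intros y Hy. apply Hd; [|lra].
  unfold ball; simpl; unfold AbsRing_ball, abs, minus, plus, opp; simpl.
  rewrite Ropp_0, Rplus_0_r, Rabs_pos_eq; lra.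
Qed.

Section DerivativeOnPositiveReals.

Variables v W : R -> R.
Hypothesis v_deriv : forall y, 0 < y -> is_derive v y (W y).

Lemma deriv_mvt y z : 0 < y -> y < z -> exists c, v z - v y = W c * (z - y) /\ y < c < z.
Proof.
  intros Hy Hyz. apply MVT_cor2; auto.
  intros c Hc. apply is_derive_Reals, v_deriv. lra.
Qed.

Lemma lt_of_deriv_neg y z : 0 < y -> y < z ->
  (forall c, y < c < z -> W c < 0) -> v z < v y.
Proof.
  intros Hy Hyz Hneg. destruct (deriv_mvt y z) as [c [Hc Hcyz]]; auto.
  specialize (Hneg c Hcyz). nra.
Qed.

Lemma lt_of_deriv_pos y z : 0 < y -> y < z ->
  (forall c, y < c < z -> 0 < W c) -> v y < v z.
Proof.
  intros Hy Hyz Hpos. destruct (deriv_mvt y z) as [c [Hc Hcyz]]; auto.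
  specialize (Hpos c Hcyz). nra.
Qed.

Lemma deriv_continuity_pt y : 0 < y -> continuity_pt v y.
Proof.
  intros Hy. apply derivable_continuous_pt. exists (W y).
  apply is_derive_Reals, v_deriv, Hy.
Qed.

Lemma deriv_eq0_of_interior_max a b c : 0 <= a -> a < c < b ->
  (forall x, a < x < b -> v x <= v c) -> W c = 0.
Proof.
  intros Ha Hc Hmax.
  assert (Hd : derivable_pt_lim v c (W c)) by (apply is_derive_Reals, v_deriv; lra).
  rewrite <- (derive_pt_eq_0 v c (W c) (exist _ (W c) Hd) Hd).
  apply (deriv_maximum v a b); try lra. intros x Hax Hxb. apply Hmax; lra.
Qed.

Lemma deriv_eq0_of_interior_min a b c : 0 <= a -> a < c < b ->
  (forall x, a < x < b -> v c <= v x) -> W c = 0.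
Proof.
  intros Ha Hc Hmin.
  assert (Hd : derivable_pt_lim v c (W c)) by (apply is_derive_Reals, v_deriv; lra).
  rewrite <- (derive_pt_eq_0 v c (W c) (exist _ (W c) Hd) Hd).
  apply (deriv_minimum v a b); try lra. intros x Hax Hxb. apply Hmin; lra.
Qed.

Lemma exists_deriv_neg_of_unimodal : unimodal v -> exists x0, 0 < x0 /\ W x0 < 0.
Proof.
  intros [x [Hx [_ Hdecr]]].
  destruct (deriv_mvt (x + 1) (x + 2)) as [c [Hc Hcb]]; try lra.
  assert (v (x + 2) < v (x + 1)) by (apply Hdecr; lra).
  exists c. split; [lra | nra].
Qed.

Lemma unimodal_of_deriv_neg_persistent :
  (forall y0 y2, 0 < y0 -> y0 < y2 -> W y0 < 0 -> W y2 < 0) ->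
  (exists x0, 0 < x0 /\ W x0 < 0) -> unimodal v.
Proof.
  intros Hpersist [x0 [Hx0 Hw0]].
  set (lower_bound := fun t => forall y, 0 < y -> W y < 0 -> t <= y).
  assert (Hbound : bound lower_bound) by (exists x0; intros t Ht; apply Ht; auto).
  assert (Hne : exists t, lower_bound t) by (exists 0; intros y Hy _; lra).
  destruct (completeness lower_bound Hbound Hne) as [m [Hub Hlub]].
  assert (Hm0 : 0 <= m) by (apply Hub; intros y Hy _; lra).
  assert (Hafter : forall y, m < y -> W y < 0).
  { intros y Hy.
    destruct (classic (exists y', 0 < y' /\ W y' < 0 /\ y' < y)) as [[y' [? [? ?]]] | Hnone].
    - apply (Hpersist y'); auto.
    - assert (lower_bound y).
      { intros y' Hy' Hw'. destruct (Rle_or_lt y y'); auto.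
        exfalso; apply Hnone; exists y'; auto. }
      assert (y <= m) by (apply Hub; auto). lra. }
  assert (Hbefore : forall y, 0 < y < m -> 0 <= W y).
  { intros y Hy. destruct (Rle_or_lt 0 (W y)) as [|Hw]; auto.
    assert (m <= y) by (apply Hlub; intros t Ht; apply Ht; lra). lra. }
  exists m. split; [exact Hm0|]. split.
  - intros y z Hy Hyz Hz. destruct (Req_dec y z) as [-> | Hyz']; [lra|].
    destruct (deriv_mvt y z) as [c [Hc Hcb]]; try lra.
    assert (0 <= W c) by (apply Hbefore; lra). nra.
  - intros y z Hy Hz. apply lt_of_deriv_neg; try lra.
    intros c Hc. apply Hafter. lra.
Qed.

Section CriticalLevel.

Variable K : R.
Hypothesis deriv_at_crit : forall y, 0 < y -> W y = 0 ->
  exists c, 0 < c /\ is_derive W y (c * (v y - K)).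
Hypothesis below_near_0 : exists d, 0 < d /\ forall y, 0 < y < d -> v y < K.

Lemma crit_above_left y : 0 < y -> W y = 0 -> K < v y ->
  exists d, 0 < d /\ forall z, y - d < z < y -> v y < v z.
Proof.
  intros Hy Hcrit HK. destruct (deriv_at_crit y Hy Hcrit) as [c [Hc HdW]].
  destruct (is_derive_pos_locally W y _ HdW) as [d [Hd [Hleft _]]]; [nra|].
  exists (Rmin d y). split; [apply Rmin_glb_lt; lra|].
  intros z Hz. pose proof (Rmin_l d y); pose proof (Rmin_r d y).
  apply lt_of_deriv_neg; try lra. intros t Ht. rewrite <- Hcrit. apply Hleft. lra.
Qed.

Lemma crit_below_left y : 0 < y -> W y = 0 -> v y < K ->
  exists d, 0 < d /\ forall z, y - d < z < y -> v z < v y.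
Proof.
  intros Hy Hcrit HK. destruct (deriv_at_crit y Hy Hcrit) as [c [Hc HdW]].
  destruct (is_derive_neg_locally W y _ HdW) as [d [Hd [Hleft _]]]; [nra|].
  exists (Rmin d y). split; [apply Rmin_glb_lt; lra|].
  intros z Hz. pose proof (Rmin_l d y); pose proof (Rmin_r d y).
  apply lt_of_deriv_pos; try lra. intros t Ht. rewrite <- Hcrit. apply Hleft. lra.
Qed.

(* The maximum of [v] on [[d1, y0]] is interior, hence a critical point above [K]. *)
Lemma le_level_of_deriv_neg y0 : 0 < y0 -> W y0 < 0 -> v y0 <= K.
Proof.
  intros Hy0 Hw0. destruct (Rle_or_lt (v y0) K) as [|Habove]; auto. exfalso.
  destruct below_near_0 as [d [Hd Hbelow]].
  pose proof (Rmin_l (d / 2) (y0 / 2)); pose proof (Rmin_r (d / 2) (y0 / 2)).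
  set (d1 := Rmin (d / 2) (y0 / 2)) in *.
  assert (Hd1 : 0 < d1) by (apply Rmin_glb_lt; lra).
  assert (Hvd1 : v d1 < K) by (apply Hbelow; lra).
  destruct (continuity_ab_maj v d1 y0) as [ym [Hmax Hym]];
    [lra | intros c Hc; apply deriv_continuity_pt; lra |].
  destruct (is_derive_neg_locally v y0 _ (v_deriv y0 Hy0) Hw0) as [e [He [Hleft _]]].
  destruct (exists_left_near d1 y0 e) as [y [Hy Hye]]; [lra | lra |].
  assert (v y0 < v y) by (apply Hleft; lra).
  assert (v y <= v ym) by (apply Hmax; lra).
  assert (ym <> d1) by (intro E; rewrite E in *; lra).
  assert (ym <> y0) by (intro E; rewrite E in *; lra).
  assert (Hcrit : W ym = 0).
  { apply (deriv_eq0_of_interior_max d1 y0); try lra. intros x Hx. apply Hmax. lra. }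
  destruct (crit_above_left ym) as [e' [He' Hleft']]; try lra.
  destruct (exists_left_near d1 ym e') as [z [Hz Hze]]; [lra | lra |].
  assert (v ym < v z) by (apply Hleft'; lra).
  assert (v z <= v ym) by (apply Hmax; lra). lra.
Qed.

(* Otherwise the minimum of [v] on [[y0, y2]] is a critical point below [K]. *)
Lemma deriv_neg_persistent y0 y2 : 0 < y0 -> y0 < y2 -> W y0 < 0 -> W y2 < 0.
Proof.
  intros Hy0 Hy02 Hw0. destruct (Rlt_or_le (W y2) 0) as [|Hw2]; auto. exfalso.
  pose proof (le_level_of_deriv_neg y0 Hy0 Hw0).
  destruct (continuity_ab_min v y0 y2) as [ym [Hmin Hym]];
    [lra | intros c Hc; apply deriv_continuity_pt; lra |].
  destruct (is_derive_neg_locally v y0 _ (v_deriv y0 Hy0) Hw0) as [e [He [_ Hright]]].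
  destruct (exists_right_near y0 y2 e) as [y [Hy Hye]]; [lra | lra |].
  assert (v y < v y0) by (apply Hright; lra).
  assert (v ym <= v y) by (apply Hmin; lra).
  assert (ym <> y0) by (intro E; rewrite E in *; lra).
  assert (Hcrit : W ym = 0).
  { destruct (Rle_lt_or_eq_dec _ _ (proj2 Hym)) as [Hlt | ->].
    - apply (deriv_eq0_of_interior_min y0 y2); try lra. intros x Hx. apply Hmin. lra.
    - destruct (Rle_lt_or_eq_dec _ _ Hw2) as [Hpos|]; auto. exfalso.
      destruct (is_derive_pos_locally v y2 _ (v_deriv y2 ltac:(lra)) Hpos)
        as [e' [He' [Hleft' _]]].
      destruct (exists_left_near y0 y2 e') as [z [Hz Hze]]; [lra | lra |].
      assert (v z < v y2) by (apply Hleft'; lra).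
      assert (v y2 <= v z) by (apply Hmin; lra). lra. }
  destruct (crit_below_left ym) as [e' [He' Hleft']]; try lra.
  destruct (exists_left_near y0 ym e') as [z [Hz Hze]]; [lra | lra |].
  assert (v z < v ym) by (apply Hleft'; lra).
  assert (v ym <= v z) by (apply Hmin; lra). lra.
Qed.

Lemma unimodal_iff_exists_deriv_neg : unimodal v <-> exists x0, 0 < x0 /\ W x0 < 0.
Proof.
  split.
  - apply exists_deriv_neg_of_unimodal.
  - apply unimodal_of_deriv_neg_persistent, deriv_neg_persistent.
Qed.

End CriticalLevel.

End DerivativeOnPositiveReals.

Lemma ode_rhs_derive_at_crit sigma eta alpha h a beta (v : R -> R) y :
  sigma <> 0 -> eta <> 0 -> is_derive v y 0 ->
  is_derive (fun y => ode_rhs sigma eta alpha h a beta y (v y)) y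
    (2 * eta / sigma ^ 2 * (v y - h / eta)).
Proof.
  intros Hsigma Heta Hv. unfold ode_rhs. auto_derive.
  - repeat split; exists 0; exact Hv.
  - replace (Derive (fun x => v x) y) with 0 by (symmetry; apply is_derive_unique, Hv).
    field. auto.
Qed.

Lemma sol_unimodal_iff sigma eta alpha h r a beta v :
  0 < sigma -> 0 < eta -> 0 < h -> 0 <= r ->
  is_sol sigma eta alpha h r a beta v ->
  (unimodal v <-> exists x0, 0 < x0 /\ Derive v x0 < 0).
Proof.
  intros Hsigma Heta Hh Hr [_ [Hlim0 [_ Hderiv]]].
  set (W := fun y => ode_rhs sigma eta alpha h a beta y (v y)).
  assert (Hcrit : forall y, 0 < y -> W y = 0 ->
            exists c, 0 < c /\ is_derive W y (c * (v y - h / eta))).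
  { intros y Hy Hw. exists (2 * eta / sigma ^ 2). split.
    - apply Rdiv_lt_0_compat; [lra | apply pow_lt; lra].
    - apply ode_rhs_derive_at_crit; try lra. rewrite <- Hw. exact (Hderiv y Hy). }
  assert (Hbelow : exists d, 0 < d /\ forall y, 0 < y < d -> v y < h / eta).
  { apply (at_right_lt_of_lim v (- r)); auto.
    assert (0 < h / eta) by (apply Rdiv_lt_0_compat; lra). lra. }
  rewrite (unimodal_iff_exists_deriv_neg v W Hderiv (h / eta) Hcrit Hbelow).
  split; intros [x0 [Hx0 Hneg]]; exists x0; split; auto;
    rewrite (is_derive_unique v x0 _ (Hderiv x0 Hx0)) in *; exact Hneg.
Qed.

Theorem lemma12 (sigma eta alpha h r a : R)
  (Hsigma : 0 < sigma) (Heta : 0 < eta) (Halpha : 0 < alpha) (Hh : 0 < h)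
  (Hr : 0 <= r) :
  (a > - (alpha / 4) * r ->
     forall (beta : R) (v : R -> R), 0 <= beta ->
       is_sol sigma eta alpha h r a beta v ->
       (in_D1 beta v <-> exists x0, 0 < x0 /\ Derive v x0 < 0)) /\
  (a <= - (alpha / 4) * r ->
     forall (beta : R) (v : R -> R), beta2_low alpha r a < beta ->
       is_sol sigma eta alpha h r a beta v ->
       (in_D2 alpha r a beta v <-> exists x0, 0 < x0 /\ Derive v x0 < 0)).
Proof.
  split; intros _ beta v Hbeta Hsol; unfold in_D1, in_D2;
    rewrite <- (sol_unimodal_iff sigma eta alpha h r a beta v); tauto.
Qed.
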